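(* Let $q$ be a prime power and $\mathcal{L}$ a non-empty set of lines of $\mathrm{PG}(n,q)$ satisfying (Pt), (Pl), (Sd) and (To) (see context). Let $M$ be a subspace of $\mathrm{PG}(n,q)$, and let $\ell\in\mathcal{L}\setminus\mathcal{L}_M$ be a line that meets a line $s\in\mathcal{L}_M$. Then: (a) $s$ is the only line of $\mathcal{L}_M$ meeting $\ell$. (b) If $\ell^M\in\mathcal{L}_M$ meets $s$ in exactly one point, then $\mathcal{L}_{\langle \ell^M,\ell\rangle}=\mathcal{L}_{\langle \ell^M,s\rangle}\cup\mathcal{L}_{\langle s,\ell\rangle}$. (c) If $\ell^M_1,\ell^M_2\in\mathcal{L}_M$ meet $s$ in exactly one point $P$, resp. $Q$, then $\mathcal{L}_{\langle \ell^M_1,\ell\rangle}\cap\mathcal{L}_{\langle \ell^M_2,\ell\rangle}=\mathcal{L}_{\langle \ell^M_1,\ell\rangle}$ if $P=Q$, and $=\mathcal{L}_{\langle s,\ell\rangle}$ if $P\ne Q$. (d) If $\ell^M_1\in\mathcal{L}_M$ meets $s$ in exactly one point and $\ell^M_2\in\mathcal{L}_M$ is disjoint from $s$, then $\mathcal{L}_{\langle \ell^M_1,\ell\rangle}\cap\mathcal{L}_{\langle \ell^M_2,\ell\rangle}=\{\ell\}$.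
   Context: (Pt): every point of $\mathrm{PG}(n,q)$ lies on $0$ or $q+1$ lines of $\mathcal{L}$. (Pl): every plane contains $0$, $1$ or $q+1$ lines of $\mathcal{L}$. (Sd): every solid ($3$-dimensional subspace) contains $0$, $1$, $q+1$ or $2q+1$ lines of $\mathcal{L}$. (To): $|\mathcal{L}|\le q^5+q^4+q^3+q^2+q+1$. For a subspace $W$, $\mathcal{L}_W$ denotes the set of lines of $\mathcal{L}$ contained in $W$; $\langle X,Y\rangle$ denotes the subspace spanned by $X$ and $Y$. *)

From HB Require Import structures.
From mathcomp Require Import all_boot all_order all_algebra all_field.
Set Implicit Arguments. Unset Strict Implicit. Unset Printing Implicit Defensive.
Import GRing.Theory.
Local Open Scope ring_scope.

(* PG(n,q): subspaces of the vector space F^(n+1), F a finite field with q elements.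
   A projective subspace of projective dimension k is a vector subspace of
   dimension k+1. *)
Definition PGspace (F : finFieldType) (n : nat) := {vspace 'rV[F]_(n.+1)}.

Section PG.
Variables (F : finFieldType) (n : nat).
Local Notation V := (PGspace F n).

Definition is_point (P : V) := \dim P == 1%N.
Definition is_line (l : V) := \dim l == 2%N.
Definition is_plane (p : V) := \dim p == 3%N.
Definition is_solid (S : V) := \dim S == 4%N.

Definition meet (U W : V) := (U :&: W)%VS != 0%VS.

Definition LW (L : seq V) (W : V) : seq V := [seq l <- L | (l <= W)%VS].

Definition prop_Pt (q : nat) (L : seq V) :=
  forall P : V, is_point P ->
    count (fun l => (P <= l)%VS) L \in [:: 0%N; q.+1].
Definition prop_Pl (q : nat) (L : seq V) :=
  forall p : V, is_plane p -> size (LW L p) \in [:: 0%N; 1%N; q.+1].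
Definition prop_Sd (q : nat) (L : seq V) :=
  forall S : V, is_solid S -> size (LW L S) \in [:: 0%N; 1%N; q.+1; (2 * q).+1].
Definition prop_To (q : nat) (L : seq V) :=
  (size L <= q ^ 5 + q ^ 4 + q ^ 3 + q ^ 2 + q + 1)%N.

Definition good_line_set (q : nat) (L : seq V) :=
  [/\ L != [::], uniq L & all is_line L] /\
  [/\ prop_Pt q L, prop_Pl q L, prop_Sd q L & prop_To q L].
End PG.

From HB Require Import structures.
From mathcomp Require Import all_boot all_order all_algebra all_field.
From mathcomp Require Import zify.
Import GRing.Theory.
Set Implicit Arguments. Unset Strict Implicit. Unset Printing Implicit Defensive.

(* Counting with (Pl) and (Sd) gives two geometric facts: if two planes of a
   solid share a line of L and each holds a further line, they contain all
   lines of L in the solid (they already account for 2q+1 of them); and three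
   lines of L through a common point are coplanar (q > 1), so the lines of L in
   a plane form a pencil.  Since l meets M only in the point l :&: s, any line
   of L_M meeting l would be concurrent with l and s, putting l inside M; this
   is (a).  A line l^M of L_M through a point of s other than l :&: s is then
   skew to l, so <l^M, l> is a solid containing the planes <l^M, s> and <s, l>,
   which gives (b); (c) and (d) follow from (a), (b) and the pencil property. *)

Lemma count_lt_sub_in (T : eqType) (a1 a2 : pred T) (s : seq T) x :
  {in s, subpred a1 a2} -> x \in s -> a2 x -> ~~ a1 x -> count a1 s < count a2 s.
Proof.
move=> sub12 xs a2x a1x.
have -> : count a2 s = count (predU a1 (predD a2 a1)) s.
  by apply: eq_in_count => y /sub12 /=; case: (a1 y) => [->|_]; rewrite ?andbT.
have disj : count (predI a1 (predD a2 a1)) s = 0.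
  by rewrite -(count_pred0 s); apply: eq_count => y /=; case: (a1 y); rewrite ?andbF.
have := count_predUI a1 (predD a2 a1) s; rewrite disj.
have : 0 < count (predD a2 a1) s by rewrite -has_count; apply/hasP; exists x => //=; rewrite a1x a2x.
lia.
Qed.

Section Subspaces.
Variables (K : fieldType) (vT : vectType K).
Implicit Types U W a b c x y : {vspace vT}.

Lemma subv_dim_eq U W : (U <= W)%VS -> \dim W <= \dim U -> U = W.
Proof. by move=> UW WU; apply/eqP; rewrite eqEdim UW. Qed.

Lemma ltn_dimv_cap U W : ~~ (U <= W)%VS -> \dim (U :&: W) < \dim U.
Proof. by rewrite (ltn_leqif (dimv_leqif_sup (capvSl U W))) subv_cap subvv. Qed.

Lemma sub_cap_eq k U W x y :
  \dim U = k.+1 -> \dim W = k.+1 -> U != W -> \dim x = k -> \dim y = k ->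
  (x <= U)%VS -> (x <= W)%VS -> (y <= U)%VS -> (y <= W)%VS -> x = y.
Proof.
move=> dU dW UW dx dy xU xW yU yW.
have dUW : \dim (U :&: W) <= k.
  rewrite -ltnS -dU ltn_dimv_cap //; move: UW; apply: contra => sUW.
  by rewrite eqEdim sUW dU dW leqnn.
 rewrite (@subv_dim_eq x (U :&: W)) ?subv_cap ?xU ?dx //.
by rewrite (@subv_dim_eq y (U :&: W)) ?subv_cap ?yU ?dy.
Qed.

Lemma dimv_cap_lines a b :
  \dim a = 2 -> \dim b = 2 -> a != b -> (a :&: b != 0)%VS -> \dim (a :&: b) = 1.
Proof.
move=> da db ab; rewrite -dimv_eq0 -lt0n; have : ~~ (a <= b)%VS.
  by move: ab; apply: contra => sab; rewrite eqEdim sab da db.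
by move/ltn_dimv_cap; rewrite da; lia.
Qed.

Lemma dimv_cap_coplanar_lines p a b : \dim p = 3 -> \dim a = 2 -> \dim b = 2 ->
  a != b -> (a <= p)%VS -> (b <= p)%VS -> \dim (a :&: b) = 1.
Proof.
move=> dp da db ab ap bp; apply: dimv_cap_lines => //; rewrite -dimv_eq0.
have := dimvS (_ : a + b <= p)%VS; rewrite subv_add ap bp dp => /(_ isT).
by have := dimv_sum_cap a b; rewrite da db; lia.
Qed.

Lemma dimv_add_lines a b :
  \dim a = 2 -> \dim b = 2 -> \dim (a :&: b) = 1 -> \dim (a + b) = 3.
Proof. by move=> da db dab; have := dimv_sum_cap a b; rewrite da db dab; lia. Qed.

Lemma dimv_add_skew_lines a b :
  \dim a = 2 -> \dim b = 2 -> (a :&: b = 0)%VS -> \dim (a + b) = 4.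
Proof. by move=> da db dab; have := dimv_sum_cap a b; rewrite da db dab dimv0; lia. Qed.

Lemma dimv_add_plane_line W c : \dim W = 3 -> \dim c = 2 -> ~~ (c <= W)%VS ->
  (W :&: c != 0)%VS -> \dim (W + c) = 4.
Proof.
move=> dW dc cW; rewrite -dimv_eq0 -lt0n capvC => Wc.
have := ltn_dimv_cap cW; have := dimv_sum_cap W c; rewrite capvC dW dc; lia.
Qed.

End Subspaces.

Section LineSet.
Variables (F : finFieldType) (n q : nat) (L : seq (PGspace F n)).
Hypotheses (L_uniq : uniq L) (L_lines : all (@is_line F n) L).
Hypotheses (hPt : prop_Pt q L) (hPl : prop_Pl q L) (hSd : prop_Sd q L).
Hypothesis q_gt1 : 1 < q.

Local Notation lines_in W := (fun x : PGspace F n => (x <= W)%VS).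
Local Notation lines_through P := (fun x : PGspace F n => (P <= x)%VS).

Lemma dim_line x : x \in L -> \dim x = 2.
Proof. by move/(allP L_lines)/eqP. Qed.

Lemma count_lines_point P x :
  \dim P = 1 -> x \in L -> (P <= x)%VS -> count (lines_through P) L = q.+1.
Proof.
move=> dP xL Px; have := hPt (introT eqP dP); rewrite !inE => /orP [/eqP c0|/eqP //].
by have := has_count (lines_through P) L; rewrite c0 => /hasP; case; exists x.
Qed.

Lemma count_lines_plane p a b : \dim p = 3 -> a \in L -> b \in L -> a != b ->
  (a <= p)%VS -> (b <= p)%VS -> count (lines_in p) L = q.+1.
Proof.
move=> dp aL bL ab ap bp; have : 2 <= count (lines_in p) L.
  rewrite -size_filter -[2]/(size [:: a; b]) uniq_leq_size ?filter_uniq //=.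
    by rewrite inE ab.
  by move=> y; rewrite !inE mem_filter => /orP [] /eqP ->; rewrite ?ap ?bp.
by have := hPl (introT eqP dp); rewrite /LW size_filter !inE => /or3P [] /eqP ->.
Qed.

Lemma count_lines_solid S : \dim S = 4 -> count (lines_in S) L <= (2 * q).+1.
Proof.
by move=> dS; have := hSd (introT eqP dS); rewrite /LW size_filter !inE => /or4P [] /eqP ->; lia.
Qed.

Lemma lines_in_two_planes S W1 W2 a b c :
  \dim S = 4 -> \dim W1 = 3 -> \dim W2 = 3 -> W1 != W2 ->
  (W1 <= S)%VS -> (W2 <= S)%VS -> a \in L -> b \in L -> c \in L -> a != b -> b != c ->
  (a <= W1)%VS -> (b <= W1)%VS -> (b <= W2)%VS -> (c <= W2)%VS ->
  {in L, forall x, (x <= S)%VS -> (x <= W1)%VS || (x <= W2)%VS}.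
Proof.
move=> dS d1 d2 W12 W1S W2S aL bL cL ab bc a1 b1 b2 c2 x xL xS.
apply/negPn/negP => x12.
have c1 := count_lines_plane d1 aL bL ab a1 b1.
have c2' := count_lines_plane d2 bL cL bc b2 c2.
have cb : count (predI (lines_in W1) (lines_in W2)) L = 1.
  transitivity (count_mem b L); last by rewrite count_uniq_mem ?bL.
  apply: eq_in_count => y yL /=.
  apply/andP/eqP => [[y1 y2]|->]; last by rewrite b1 b2.
  exact: sub_cap_eq d1 d2 W12 (dim_line yL) (dim_line bL) y1 y2 b1 b2.
have sub : {in L, subpred (predU (lines_in W1) (lines_in W2)) (lines_in S)}.
  by move=> y _ /orP [] yW; [apply: subv_trans yW W1S | apply: subv_trans yW W2S].
have := count_lt_sub_in sub xL xS x12; have := count_lines_solid dS.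
have := count_predUI (lines_in W1) (lines_in W2) L; rewrite c1 c2' cb.
by move: (count _ L) (count (lines_in S) L) => u v; clear; lia.
Qed.

Lemma concurrent_lines_coplanar a b c Z : a \in L -> b \in L -> c \in L ->
  a != b -> a != c -> b != c -> (Z != 0)%VS ->
  (Z <= a)%VS -> (Z <= b)%VS -> (Z <= c)%VS -> (c <= a + b)%VS.
Proof.
(* Otherwise a + b + c is a solid and the plane b + c would contain no line of L
   besides b and c, fewer than q + 1 > 2. *)
move=> aL bL cL ab ac bc Z0 Za Zb Zc; apply/negPn/negP => c_ab.
have da := dim_line aL; have db := dim_line bL; have dc := dim_line cL.
have meetZ U W : (Z <= U)%VS -> (Z <= W)%VS -> (U :&: W != 0)%VS.
  move=> ZU ZW; apply: contraNneq Z0 => UW0.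
  by rewrite -subv0 -UW0 subv_cap ZU ZW.
have plane U W : \dim U = 2 -> \dim W = 2 -> U != W -> (Z <= U)%VS -> (Z <= W)%VS ->
    \dim (U + W) = 3.
  by move=> dU dW UW ZU ZW; apply: dimv_add_lines (dimv_cap_lines dU dW UW (meetZ _ _ ZU ZW)).
have d_ab := plane _ _ da db ab Za Zb.
have d_ac := plane _ _ da dc ac Za Zc.
have d_bc := plane _ _ db dc bc Zb Zc.
have dS : \dim (a + b + c) = 4.
  apply: dimv_add_plane_line d_ab dc c_ab (meetZ _ _ _ Zc).
  exact: subv_trans Za (addvSl _ _).
have ab_ac : (a + b)%VS != (a + c)%VS by apply: contraNneq c_ab => ->; apply: addvSr.
have ab_bc : (a + b)%VS != (b + c)%VS by apply: contraNneq c_ab => ->; apply: addvSr.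
have ac_bc : (a + c)%VS != (b + c)%VS.
  apply: contraNneq ab_ac => acbc; apply/eqP/subv_dim_eq; last by rewrite d_ab d_ac.
  by rewrite subv_add addvSl acbc addvSl.
have in_bc : {in L, forall y, (y <= b + c)%VS -> y \in [:: b; c]}.
  move=> y yL ybc; have dy := dim_line yL.
  have ba : b != a by rewrite eq_sym.
  have yS : (y <= a + b + c)%VS by apply: subv_trans ybc _; rewrite -addvA addvSr.
  have ac_S : (a + c <= a + b + c)%VS by rewrite -addvA addvS ?subvv ?addvSr.
  case/orP: (lines_in_two_planes dS d_ab d_ac ab_ac (addvSl _ _) ac_S bL aL cL ba ac
    (addvSr _ _) (addvSl _ _) (addvSl _ _) (addvSr _ _) yL yS) => [yab|yac].
  - by rewrite (sub_cap_eq d_ab d_bc ab_bc dy db yab ybc (addvSr _ _) (addvSl _ _)) mem_head.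
  - by rewrite (sub_cap_eq d_ac d_bc ac_bc dy dc yac ybc (addvSr _ _) (addvSr _ _)) !inE eqxx orbT.
have : count (lines_in (b + c)) L <= 2.
  rewrite -size_filter -[2]/(size [:: b; c]) uniq_leq_size ?filter_uniq //.
  by move=> y; rewrite mem_filter => /andP [ybc yL]; apply: in_bc.
by rewrite (count_lines_plane d_bc bL cL bc (addvSl _ _) (addvSr _ _)) ltnNge q_gt1.
Qed.

Lemma plane_lines_through_cap p a b : \dim p = 3 -> a \in L -> b \in L -> a != b ->
  (a <= p)%VS -> (b <= p)%VS -> {in L, forall x, (x <= p)%VS -> (a :&: b <= x)%VS}.
Proof.
move=> dp aL bL ab ap bp x xL xp; apply/negPn/negP => Rx.
have dR := dimv_cap_coplanar_lines dp (dim_line aL) (dim_line bL) ab ap bp.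
have R0 : (a :&: b != 0)%VS by rewrite -dimv_eq0 dR.
have sub : {in L, subpred (lines_through (a :&: b)) (lines_in p)}.
  move=> y yL Ry; case: (eqVneq y a) => [->|ya] //; case: (eqVneq y b) => [->|yb] //.
  have a_y : a != y by rewrite eq_sym.
  have b_y : b != y by rewrite eq_sym.
  have yab := concurrent_lines_coplanar aL bL yL ab a_y b_y R0 (capvSl _ _) (capvSr _ _) Ry.
  by apply: subv_trans yab _; rewrite subv_add ap bp.
have := count_lt_sub_in sub xL xp Rx.
by rewrite (count_lines_point dR aL (capvSl _ _)) (count_lines_plane dp aL bL ab ap bp) ltnn.
Qed.

Section LineOutsideM.
Variables (M l s : PGspace F n).
Hypotheses (lL : l \in L) (l_notin_M : ~~ (l <= M)%VS).
Hypotheses (sL : s \in L) (s_in_M : (s <= M)%VS) (ls_meet : meet l s).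

Let dl := dim_line lL.
Let ds := dim_line sL.

Lemma line_outside_neq t : (t <= M)%VS -> t != l.
Proof. by move=> tM; apply: contraNneq l_notin_M => <-. Qed.

Lemma dim_cap_l_s : \dim (l :&: s) = 1.
Proof. by apply: dimv_cap_lines; rewrite // eq_sym line_outside_neq. Qed.

Lemma capv_l_M : (l :&: M)%VS = (l :&: s)%VS.
Proof.
apply/esym/subv_dim_eq; first by rewrite capvS.
by rewrite dim_cap_l_s -ltnS -dl ltn_dimv_cap.
Qed.

Lemma line_in_M_meeting_l t : t \in L -> (t <= M)%VS -> meet t l -> t = s.
Proof.
move=> tL tM tl; apply/eqP/negPn/negP => ts.
have Zs : (t :&: l <= s)%VS.
  by apply: subv_trans (capvSr l s); rewrite -capv_l_M capvC capvS ?subvv.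
have sl : s != l by rewrite line_outside_neq.
have l_ts := concurrent_lines_coplanar tL sL lL ts (line_outside_neq tM) sl tl
  (capvSl _ _) Zs (capvSr _ _).
by move: l_notin_M; rewrite (subv_trans l_ts) ?subv_add ?tM ?s_in_M.
Qed.

Lemma cap_point_neq_s t : \dim (t :&: s) = 1 -> t != s.
Proof. by move=> dts; apply/eqP => ts; move: dts; rewrite ts capvv ds. Qed.

Section LineInM.
Variable lM : PGspace F n.
Hypotheses (lML : lM \in L) (lM_in_M : (lM <= M)%VS) (lM_s_point : \dim (lM :&: s) = 1).

Let dlM := dim_line lML.

Lemma capv_lM_l : (lM :&: l = 0)%VS.
Proof.
apply/eqP/negPn/negP => lMl; case/negP: (cap_point_neq_s lM_s_point).
by rewrite (line_in_M_meeting_l lML lM_in_M lMl).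
Qed.

Lemma s_sub_span : (s <= lM + l)%VS.
Proof.
have PX0 : (lM :&: s :&: (l :&: s) = 0)%VS.
  by apply/eqP; rewrite -subv0 -capv_lM_l capvS ?capvSl.
have dPX : \dim (lM :&: s + l :&: s) = 2.
  by have := dimv_sum_cap (lM :&: s) (l :&: s); rewrite PX0 dimv0 lM_s_point dim_cap_l_s addn0 => ->.
have s_eq : (lM :&: s + l :&: s)%VS = s.
  by apply: subv_dim_eq; rewrite ?subv_add ?capvSr ?dPX ?ds.
by rewrite -[X in (X <= _)%VS]s_eq; apply: addvS; apply: capvSl.
Qed.

Lemma span_addv_s : (lM + s + l = lM + l)%VS.
Proof. by rewrite -addvA (addvC s l) addvA; apply/addv_idPl/s_sub_span. Qed.

Lemma lines_in_span_split :
  {in L, forall x, (x <= lM + l)%VS = (x <= lM + s)%VS || (x <= s + l)%VS}.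
Proof.
have dS : \dim (lM + l) = 4 := dimv_add_skew_lines dlM dl capv_lM_l.
have d1 : \dim (lM + s) = 3 := dimv_add_lines dlM ds lM_s_point.
have d2 : \dim (s + l) = 3 by apply: dimv_add_lines; rewrite // capvC dim_cap_l_s.
have W1S : (lM + s <= lM + l)%VS by rewrite -span_addv_s addvSl.
have W2S : (s + l <= lM + l)%VS by rewrite subv_add s_sub_span addvSr.
have W12 : (lM + s)%VS != (s + l)%VS.
  apply: contraNneq l_notin_M => e; apply: subv_trans (addvSr s l) _.
  by rewrite -e subv_add lM_in_M s_in_M.
have lMs := cap_point_neq_s lM_s_point.
have sl : s != l by rewrite line_outside_neq.
move=> x xL; apply/idP/idP => [xS|/orP [] xW]; last 2 first.
- exact: subv_trans xW W1S.
- exact: subv_trans xW W2S.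
exact: lines_in_two_planes dS d1 d2 W12 W1S W2S lML sL lL lMs sl
  (addvSl _ _) (addvSr _ _) (addvSl _ _) (addvSr _ _) x xL xS.
Qed.

End LineInM.

Lemma span_eq_of_same_point l1 l2 :
  l1 \in L -> (l1 <= M)%VS -> \dim (l1 :&: s) = 1 ->
  l2 \in L -> (l2 <= M)%VS -> \dim (l2 :&: s) = 1 ->
  (l1 :&: s)%VS = (l2 :&: s)%VS -> (l1 + l)%VS = (l2 + l)%VS.
Proof.
move=> l1L l1M d1 l2L l2M d2 P12.
have planes : (l1 + s)%VS = (l2 + s)%VS.
  case: (eqVneq l1 l2) => [-> // | l12].
  have l21 : l2 != l1 by rewrite eq_sym.
  have sl1 : s != l1 by rewrite eq_sym cap_point_neq_s.
  have P0 : (l1 :&: s != 0)%VS by rewrite -dimv_eq0 d1.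
  have Pl2 : (l1 :&: s <= l2)%VS by rewrite P12 capvSl.
  have l1_sub := concurrent_lines_coplanar l2L sL l1L (cap_point_neq_s d2) l21 sl1 P0
    Pl2 (capvSr _ _) (capvSl _ _).
  apply: subv_dim_eq; first by rewrite subv_add l1_sub addvSr.
  by rewrite (dimv_add_lines (dim_line l1L) ds d1) (dimv_add_lines (dim_line l2L) ds d2).
by rewrite -(span_addv_s l1L l1M d1) -(span_addv_s l2L l2M d2) planes.
Qed.

Lemma lines_in_spans_diff_point l1 l2 :
  l1 \in L -> (l1 <= M)%VS -> \dim (l1 :&: s) = 1 ->
  l2 \in L -> (l2 <= M)%VS -> \dim (l2 :&: s) = 1 -> (l1 :&: s)%VS != (l2 :&: s)%VS ->
  {in L, forall x, (x <= l1 + l)%VS && (x <= l2 + l)%VS = (x <= s + l)%VS}.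
Proof.
move=> l1L l1M d1 l2L l2M d2 P12 x xL.
rewrite (lines_in_span_split l1L l1M d1 xL) (lines_in_span_split l2L l2M d2 xL).
case: (boolP (x <= s + l)%VS) => xsl; rewrite ?orbT ?orbF //.
apply/negP => /andP [x1 x2]; case/negP: xsl.
have dp1 := dimv_add_lines (dim_line l1L) ds d1.
have dp2 := dimv_add_lines (dim_line l2L) ds d2.
case: (eqVneq (l1 + s)%VS (l2 + s)%VS) => [planes | planes]; last first.
  by rewrite (sub_cap_eq dp1 dp2 planes (dim_line xL) ds x1 x2 (addvSr _ _) (addvSr _ _)) addvSl.
(* In the common plane the lines of L form a pencil through l1 :&: l2, which
   then lies on s and equals both points. *)
have l12 : l1 != l2 by apply: contraNneq P12 => ->.
have l2p : (l2 <= l1 + s)%VS by rewrite planes addvSl.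
have Rs := plane_lines_through_cap dp1 l1L l2L l12 (addvSl _ _) l2p sL (addvSr _ _).
have dR := dimv_cap_coplanar_lines dp1 (dim_line l1L) (dim_line l2L) l12 (addvSl _ _) l2p.
have R1 : (l1 :&: l2)%VS = (l1 :&: s)%VS.
  by apply: subv_dim_eq; rewrite ?d1 ?dR // subv_cap capvSl Rs.
have R2 : (l1 :&: l2)%VS = (l2 :&: s)%VS.
  by apply: subv_dim_eq; rewrite ?d2 ?dR // subv_cap capvSr Rs.
by rewrite -R1 -R2 eqxx in P12.
Qed.

Lemma lines_in_spans_skew l1 l2 :
  l1 \in L -> (l1 <= M)%VS -> \dim (l1 :&: s) = 1 ->
  l2 \in L -> (l2 <= M)%VS -> ~~ meet l2 s ->
  {in L, forall x, (x <= l1 + l)%VS -> (x <= l2 + l)%VS -> x = l}.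
Proof.
move=> l1L l1M d1 l2L l2M l2s x xL x1 x2.
have dl2 := dim_line l2L.
have s_notin_T : ~~ (s <= l2 + l)%VS.
  apply/negP => sT; case/negP: l_notin_M.
  have d2s : \dim (l2 + s) = 4 := dimv_add_skew_lines dl2 ds (eqP (negbNE l2s)).
  have e : (l2 + s)%VS = (l2 + l)%VS.
    apply: subv_dim_eq; first by rewrite subv_add addvSl sT.
    by rewrite d2s; have := (dimv_add_leqif l2 l).1; rewrite dl2 dl.
  by apply: subv_trans (addvSr l2 l) _; rewrite -e subv_add l2M s_in_M.
move: x1; rewrite (lines_in_span_split l1L l1M d1 xL) => /orP [xA | xC].
  have Ts : (s :&: (l2 + l))%VS = (l :&: s)%VS.
    apply/esym/subv_dim_eq; first by rewrite capvC capvS ?addvSr.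
    by rewrite dim_cap_l_s -ltnS -ds ltn_dimv_cap.
  case: (eqVneq x s) => [xs | xs]; first by move: x2; rewrite xs (negbTE s_notin_T).
  have dxs := dimv_cap_coplanar_lines (dimv_add_lines (dim_line l1L) ds d1) (dim_line xL)
    ds xs xA (addvSr _ _).
  have xs_l : (x :&: s <= x :&: l)%VS.
    by rewrite subv_cap capvSl (subv_trans _ (capvSl l s)) // -Ts capvC capvS ?subvv.
  have xl : meet x l.
    by apply: contraTneq xs_l => ->; rewrite subv0 -dimv_eq0 dxs.
  have xM : (x <= M)%VS by apply: subv_trans xA _; rewrite subv_add l1M s_in_M.
  by rewrite (line_in_M_meeting_l xL xM xl) eqxx in xs.
have sl_notin_T : ~~ (s + l <= l2 + l)%VS.
  by move: s_notin_T; apply: contra; apply: subv_trans (addvSl _ _).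
have dsl : \dim (s + l) = 3 by apply: dimv_add_lines; rewrite // capvC dim_cap_l_s.
have dC : \dim ((s + l) :&: (l2 + l))%VS <= 2 by rewrite -ltnS -dsl ltn_dimv_cap.
have lC : l = ((s + l) :&: (l2 + l))%VS.
  by apply: subv_dim_eq; rewrite ?subv_cap ?addvSr ?dl.
by rewrite lC; apply: subv_dim_eq; rewrite ?subv_cap ?xC ?x2 ?(dim_line xL).
Qed.

Lemma LW_M_meeting_l t : t \in LW L M -> meet t l -> t = s.
Proof. by rewrite mem_filter => /andP [tM tL]; apply: line_in_M_meeting_l. Qed.

Lemma LW_span_split lM : lM \in LW L M -> \dim (lM :&: s) = 1 ->
  LW L (lM + l)%VS =i LW L (lM + s)%VS ++ LW L (s + l)%VS.
Proof.
rewrite mem_filter => /andP [lMM lML] dP x; rewrite mem_cat !mem_filter.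
by case xL: (x \in L); rewrite ?andbF // !andbT (lines_in_span_split lML lMM dP xL).
Qed.

Lemma LW_spans_cap_point l1 l2 : l1 \in LW L M -> l2 \in LW L M ->
  \dim (l1 :&: s) = 1 -> \dim (l2 :&: s) = 1 ->
  forall x, (x \in LW L (l1 + l)%VS) && (x \in LW L (l2 + l)%VS) =
    (x \in (if (l1 :&: s)%VS == (l2 :&: s)%VS
            then LW L (l1 + l)%VS else LW L (s + l)%VS)).
Proof.
rewrite !mem_filter => /andP [l1M l1L] /andP [l2M l2L] d1 d2 x.
case: eqP => [P12 | /eqP P12].
  by rewrite (span_eq_of_same_point l1L l1M d1 l2L l2M d2 P12) andbb.
rewrite !mem_filter; case xL: (x \in L); rewrite ?andbF // !andbT.
exact: lines_in_spans_diff_point.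
Qed.

Lemma LW_spans_skew l1 l2 : l1 \in LW L M -> l2 \in LW L M ->
  \dim (l1 :&: s) = 1 -> ~~ meet l2 s ->
  forall x, (x \in LW L (l1 + l)%VS) && (x \in LW L (l2 + l)%VS) = (x == l).
Proof.
rewrite !mem_filter => /andP [l1M l1L] /andP [l2M l2L] d1 l2s x; rewrite !mem_filter.
case: (eqVneq x l) => [->|xl]; first by rewrite !addvSr lL.
apply/negP => /andP [/andP [x1 xL] /andP [x2 _]].
by rewrite (lines_in_spans_skew l1L l1M d1 l2L l2M l2s xL x1 x2) eqxx in xl.
Qed.

End LineOutsideM.

End LineSet.

Local Open Scope ring_scope.

Theorem lemma5 (F : finFieldType) (n q : nat) (L : seq (PGspace F n))
  (hq : #|F| = q) (hL : good_line_set q L)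
  (M l s : PGspace F n)
  (hl : l \in L) (hlM : ~~ (l <= M)%VS)
  (hs : s \in L) (hsM : (s <= M)%VS) (hls : meet l s) :
  [/\
   (* (a) *)
   (forall t, t \in LW L M -> meet t l -> t = s),
   (* (b) *)
   (forall lM, lM \in LW L M -> \dim (lM :&: s)%VS = 1%N ->
      LW L (lM + l)%VS =i LW L (lM + s)%VS ++ LW L (s + l)%VS),
   (* (c) *)
   (forall l1 l2, l1 \in LW L M -> l2 \in LW L M ->
      \dim (l1 :&: s)%VS = 1%N -> \dim (l2 :&: s)%VS = 1%N ->
      (forall x, (x \in LW L (l1 + l)%VS) && (x \in LW L (l2 + l)%VS) =
         (x \in (if (l1 :&: s)%VS == (l2 :&: s)%VS
                 then LW L (l1 + l)%VS else LW L (s + l)%VS))))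
  & (* (d) *)
   (forall l1 l2, l1 \in LW L M -> l2 \in LW L M ->
      \dim (l1 :&: s)%VS = 1%N -> ~~ meet l2 s ->
      (forall x, (x \in LW L (l1 + l)%VS) && (x \in LW L (l2 + l)%VS) = (x == l)))].
Proof.
case: hL => [[_ L_uniq L_lines] [hPt hPl hSd _]].
have q_gt1 : (1 < q)%N.
  by rewrite -hq; apply/card_gt1P; exists 0, 1; rewrite eq_sym oner_neq0.
split.
- exact: LW_M_meeting_l L_uniq L_lines hPl hSd q_gt1 M l s hl hlM hs hsM hls.
- exact: LW_span_split L_uniq L_lines hPl hSd q_gt1 M l s hl hlM hs hsM hls.
- exact: LW_spans_cap_point L_uniq L_lines hPt hPl hSd q_gt1 M l s hl hlM hs hsM hls.
- exact: LW_spans_skew L_uniq L_lines hPl hSd q_gt1 M l s hl hlM hs hsM hls.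
Qed.
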